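(* Let $S\subset\{0,1\}^N$ with $|S|=K$ and let $1\le m\le K$ be an integer. Then $$\left\|(\ket{\psi_S}\bra{\psi_S})^{\otimes m}-\ket{\psi^{(m)}_{S,{\rm uni}}}\bra{\psi^{(m)}_{S,{\rm uni}}}\right\|_{\rm tr}\le O\!\left(\frac{m}{\sqrt K}\right),$$ i.e. the left side is at most $Cm/\sqrt K$ for a constant $C$ independent of $N,K,m,S$.
   Context: Work on $N$ qubits with computational basis $\{\ket{\mathbf z}:\mathbf z\in\{0,1\}^N\}$. The subset state is $\ket{\psi_S}=|S|^{-1/2}\sum_{\mathbf z\in S}\ket{\mathbf z}$. For a set $S'$ of $m$ distinct basis bitstrings, the unique-type state is $\ket{S'}=(m!)^{-1/2}\sum \ket{\mathbf z_1}\otimes\cdots\otimes\ket{\mathbf z_m}$, the sum running over all $m!$ orderings $(\mathbf z_1,\dots,\mathbf z_m)$ of the elements of $S'$. The pure unique-type state associated with $S$ is $\ket{\psi^{(m)}_{S,{\rm uni}}}=\binom{K}{m}^{-1/2}\sum_{S'\subset S,\,|S'|=m}\ket{S'}$. $\|A\|_{\rm tr}={\rm Tr}\sqrt{A^\dagger A}$. *)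

(* complex numbers = an arbitrary numClosedFieldType C
   (e.g. algC or R[i]); spectral decomposition from mathcomp/algebra/spectral.v *)
From HB Require Import structures.
From mathcomp Require Import all_boot all_order all_algebra.
Set Implicit Arguments. Unset Strict Implicit. Unset Printing Implicit Defensive.
Import Order.TTheory GRing.Theory Num.Theory.
Local Open Scope ring_scope.

Section QDefs.
Variable C : numClosedFieldType.

Definition bits (N : nat) := {ffun 'I_N -> bool}.
Definition mbits (N m : nat) := {ffun 'I_m -> bits N}.

(* a vector / operator on the Hilbert space spanned by a finite basis T is a
   matrix indexed by 'I_#|T|, the basis being enumerated by enum_rank *)
Definition ket (T : finType) (x : T) : 'cV[C]_#|T| :=
  \col_i (i == enum_rank x)%:R.

Definition adj m n (A : 'M[C]_(m, n)) : 'M[C]_(n, m) := map_mx Num.conj A^T.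

Definition proj n (v : 'cV[C]_n) : 'M[C]_n := v *m adj v.

Definition psd_sqrt n (M : 'M[C]_n) : 'M[C]_n :=
  invmx (spectralmx M) *m diag_mx (map_mx sqrtC (spectral_diag M)) *m spectralmx M.

Definition trnorm n (A : 'M[C]_n) : C := \tr (psd_sqrt (adj A *m A)).

Definition tensor_pow N m (A : 'M[C]_#|bits N|) : 'M[C]_#|mbits N m| :=
  \matrix_(i, j) \prod_(k < m)
     A (enum_rank ((enum_val i : mbits N m) k)) (enum_rank ((enum_val j : mbits N m) k)).

Definition psiS N (S : {set bits N}) : 'cV[C]_#|bits N| :=
  (sqrtC (#|S|%:R))^-1 *: \sum_(z in S) ket z.

Definition uniq_state N m (S' : {set bits N}) : 'cV[C]_#|mbits N m| :=
  (sqrtC ((m`!)%:R))^-1 *: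
    \sum_(z : mbits N m | injectiveb z && ([set z k | k : 'I_m] == S')) ket z.

Definition psi_uni N m (S : {set bits N}) : 'cV[C]_#|mbits N m| :=
  (sqrtC ('C(#|S|, m)%:R))^-1 *:
    \sum_(S' : {set bits N} | (S' \subset S) && (#|S'| == m)) uniq_state m S'.

End QDefs.

From HB Require Import structures.
From mathcomp Require Import all_boot all_order all_algebra.
From mathcomp Require Import ring zify.
Set Implicit Arguments. Unset Strict Implicit. Unset Printing Implicit Defensive.
Import Order.TTheory GRing.Theory Num.Theory.
Local Open Scope ring_scope.

(* Both states are normalized indicator vectors of sets of m-tuples: the
   tensor power of |psi_S> is the subset state of S^m, and the unique-type
   state is the subset state of the injective tuples of S^m.  For unit
   vectors a, b the operator |a><a| - |b><b| has eigenvalues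
   +-sqrt(1 - |<a|b>|^2) on span(a, b) and 0 elsewhere, so its trace norm is
   2 sqrt(1 - |<a|b>|^2).  For subset states of B <= A, |<a|b>|^2 = |B|/|A|,
   here K^_m / K^m; finally 1 - K^_m / K^m, the probability that m uniform
   draws from S are not all distinct, is at most m^2 / K. *)

Section Adjoint.
Variable C : numClosedFieldType.

Lemma adjE m n (A : 'M[C]_(m, n)) i j : adj A i j = (A j i)^*.
Proof. by rewrite !mxE. Qed.

Lemma adj_mul m n p (A : 'M[C]_(m, n)) (B : 'M[C]_(n, p)) :
  adj (A *m B) = adj B *m adj A.
Proof. by rewrite /adj trmx_mul map_mxM. Qed.

Lemma adjK m n (A : 'M[C]_(m, n)) : adj (adj A) = A.
Proof. exact: trmxCK. Qed.

Lemma adjB m n (A B : 'M[C]_(m, n)) : adj (A - B) = adj A - adj B.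
Proof. by apply/matrixP => i j; rewrite !mxE rmorphB. Qed.

Lemma adj_proj n (v : 'cV[C]_n) : adj (proj v) = proj v.
Proof. by rewrite /proj adj_mul adjK. Qed.

Lemma adj_normalmx n (M : 'M[C]_n) : adj M = M -> M \is normalmx.
Proof. by move=> hM; apply/normalmxP; rewrite [(M ^t* )%sesqui]hM. Qed.

End Adjoint.

Section SquareRootTrace.
Variable C : numClosedFieldType.

Lemma sqrtC_idem (x t : C) : x * x = t * x -> sqrtC x = sqrtC t * (x / t).
Proof.
move/eqP; rewrite -subr_eq0 -mulrBl mulf_eq0 subr_eq0 => /orP [] /eqP ->.
  by have [->|t0] := eqVneq t 0; rewrite ?sqrtC0 ?mul0r // divff // mulr1.
by rewrite sqrtC0 mul0r mulr0.
Qed.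

Lemma mxtrace_psd_sqrt n (M : 'M[C]_n) :
  \tr (psd_sqrt M) = \sum_i sqrtC (spectral_diag M 0 i).
Proof.
rewrite /psd_sqrt mxtrace_mulC mulKVmx ?spectral_unit // mxtrace_diag.
by apply: eq_bigr => i _; rewrite mxE.
Qed.

(* At [t = 0] both sides vanish, [x / 0] being [0]. *)
Lemma mxtrace_psd_sqrt_idem n (M : 'M[C]_n) (t : C) :
  M \is normalmx -> M *m M = t *: M -> \tr (psd_sqrt M) = sqrtC t * (\tr M / t).
Proof.
move=> /orthomx_spectralP eM MM.
have Uu := spectral_unit M.
set U := spectralmx M in eM Uu; set d := spectral_diag M in eM *.
have eD : diag_mx d = U *m M *m invmx U.
  by rewrite [in RHS]eM !mulmxA mulmxV // mul1mx mulmxK.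
have d_idem i : d 0 i * d 0 i = t * d 0 i.
  have : diag_mx d *m diag_mx d = t *: diag_mx d.
    by rewrite eD !mulmxA mulmxKV // -[U *m M *m M]mulmxA MM -scalemxAr -scalemxAl.
  by move/matrixP => /(_ i i); rewrite mulmx_diag !mxE eqxx !mulr1n.
have trM : \tr M = \sum_i d 0 i.
  by rewrite -mxtrace_diag eD mxtrace_mulC mulKmx.
rewrite mxtrace_psd_sqrt trM mulr_suml mulr_sumr.
by apply: eq_bigr => i _; apply: sqrtC_idem.
Qed.

End SquareRootTrace.

Section PureStateDistance.
Variables (C : numClosedFieldType) (n : nat) (a b : 'cV[C]_n).
Hypotheses (a_unit : adj a *m a = 1%:M) (b_unit : adj b *m b = 1%:M).

Let s : C := (adj a *m b) 0 0.
Let t : C := 1 - s * s^*.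
Let A := proj a - proj b.
Let M := adj A *m A.

Let adj_ab : adj a *m b = s%:M.
Proof. exact: mx11_scalar. Qed.

Let adj_ba : adj b *m a = s^*%:M.
Proof.
rewrite -[a in LHS]adjK -adj_mul adj_ab.
by apply/matrixP => i j; rewrite !ord1 !mxE.
Qed.

Let adj_A : adj A = A.
Proof. by rewrite adjB !adj_proj. Qed.

Let A_a : A *m a = a - s^* *: b.
Proof. by rewrite mulmxBl /proj -!mulmxA a_unit adj_ba mulmx1 mul_mx_scalar. Qed.

Let A_b : A *m b = s *: a - b.
Proof. by rewrite mulmxBl /proj -!mulmxA b_unit adj_ab mulmx1 mul_mx_scalar. Qed.

Let M_a : M *m a = t *: a.
Proof.
rewrite /M adj_A -mulmxA A_a mulmxBr -scalemxAr A_a A_b.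
by apply/matrixP => i j; rewrite !mxE /t; ring.
Qed.

Let M_b : M *m b = t *: b.
Proof.
rewrite /M adj_A -mulmxA A_b mulmxBr -scalemxAr A_a A_b.
by apply/matrixP => i j; rewrite !mxE /t; ring.
Qed.

Let M_idem : M *m M = t *: M.
Proof.
have M_A : M *m A = t *: A.
  by rewrite /A mulmxBr /proj !mulmxA M_a M_b -!scalemxAl scalerBr.
by rewrite {2}/M adj_A mulmxA M_A -scalemxAl /M adj_A.
Qed.

Let mxtrace_M : \tr M = 2 * t.
Proof.
have tr11 (X : 'M[C]_1) : \tr X = X 0 0 by rewrite /mxtrace big_ord1.
rewrite /M adj_A {1}/A mulmxBl /proj raddfB /= -!mulmxA.
rewrite !(mxtrace_mulC a) !(mxtrace_mulC b) -!mulmxA A_a A_b !tr11.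
rewrite !mulmxBr -!scalemxAr a_unit b_unit adj_ab adj_ba !mxE /t eqxx /=; ring.
Qed.

Lemma trnorm_projB : trnorm (proj a - proj b) = 2 * sqrtC (1 - s * s^*).
Proof.
have M_normal : M \is normalmx by apply: adj_normalmx; rewrite /M adj_mul adjK.
rewrite /trnorm -/A -/M (mxtrace_psd_sqrt_idem M_normal M_idem) mxtrace_M -/t.
by have [->|t0] := eqVneq t 0; rewrite ?sqrtC0 ?mul0r ?mulr0 // mulfK // mulrC.
Qed.

End PureStateDistance.

Section SubsetStates.
Variable C : numClosedFieldType.

Definition set_state (T : finType) (A : {set T}) : 'cV[C]_#|T| :=
  (sqrtC #|A|%:R)^-1 *: \sum_(x in A) ket C x.

Lemma psiSE N (S : {set bits N}) : psiS C S = set_state S.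
Proof. by []. Qed.

Lemma sum_ketE (T : finType) (P : pred T) i :
  (\sum_(x | P x) ket C x) i 0 = (P (enum_val i))%:R.
Proof.
rewrite summxE; under eq_bigr do rewrite mxE.
case: (boolP (P (enum_val i))) => Pi.
  rewrite (bigD1 (enum_val i)) //= enum_valK eqxx big1 ?addr0 // => x /andP [_ ne].
  by apply/eqP; rewrite pnatr_eq0 eqb0 -(inj_eq enum_val_inj) enum_rankK eq_sym.
rewrite big1 // => x Px; apply/eqP; rewrite pnatr_eq0 eqb0.
by apply: contra Pi => /eqP ->; rewrite enum_rankK.
Qed.

Lemma set_stateE (T : finType) (A : {set T}) i :
  set_state A i 0 = (sqrtC #|A|%:R)^-1 * (enum_val i \in A)%:R.
Proof. by rewrite mxE sum_ketE. Qed.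

Lemma sum_natr_in (T : finType) (A : {set T}) : \sum_x ((x \in A)%:R : C) = #|A|%:R.
Proof.
rewrite (eq_bigr (fun x => if x \in A then 1 else 0)) => [|x _]; last by case: (x \in A).
by rewrite -big_mkcond /= sumr_const.
Qed.

Lemma dot_set_state (T : finType) (A B : {set T}) :
  (adj (set_state A) *m set_state B) 0 0 =
  #|A :&: B|%:R / (sqrtC #|A|%:R * sqrtC #|B|%:R).
Proof.
have real_inv (D : {set T}) : ((sqrtC #|D|%:R)^-1)^* = (sqrtC #|D|%:R)^-1 :> C.
  by rewrite geC0_conj // invr_ge0 sqrtC_ge0 ler0n.
rewrite mxE; under eq_bigr do rewrite adjE !set_stateE rmorphM /= real_inv conjC_nat.
rewrite -(big_enum_val (fun x => _ * (x \in A)%:R * (_ * (x \in B)%:R))) /=.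
rewrite -(sum_natr_in (A :&: B)) mulr_suml; apply: eq_big => // x _.
rewrite inE invfM; case: (x \in A); case: (x \in B) => /=; ring.
Qed.

Lemma set_state_unit (T : finType) (A : {set T}) :
  A != set0 -> adj (set_state A) *m set_state A = 1%:M.
Proof.
rewrite -card_gt0 -(ltr0n C) => A_gt0.
rewrite [LHS]mx11_scalar dot_set_state setIid -expr2 sqrtCK divff //.
by rewrite gt_eqF.
Qed.

Lemma trnorm_set_stateB (T : finType) (A B : {set T}) :
  B \subset A -> B != set0 ->
  trnorm (proj (set_state A) - proj (set_state B)) = 2 * sqrtC (1 - #|B|%:R / #|A|%:R).
Proof.
move=> BA B0; have A0 : A != set0.
  by rewrite -card_gt0 (leq_trans _ (subset_leq_card BA)) // card_gt0.
rewrite trnorm_projB ?set_state_unit // dot_set_state (setIidPr BA).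
have sA : sqrtC #|A|%:R != 0 :> C by rewrite sqrtC_eq0 pnatr_eq0 -lt0n card_gt0.
have sB : sqrtC #|B|%:R != 0 :> C by rewrite sqrtC_eq0 pnatr_eq0 -lt0n card_gt0.
rewrite geC0_conj ?divr_ge0 ?mulr_ge0 ?sqrtC_ge0 ?ler0n //.
congr (_ * sqrtC (1 - _)).
set x := sqrtC (#|A|%:R : C) in sA *; set y := sqrtC (#|B|%:R : C) in sB *.
rewrite -[in RHS](sqrtCK (#|A|%:R : C)) -/x -[X in X / (x * y) * _](sqrtCK (#|B|%:R : C)) -/y.
by field; apply/andP.
Qed.

End SubsetStates.

Lemma prod_scaled_bool (R : comPzSemiRingType) (I : finType) (c : R) (p : pred I) :
  \prod_k (c * (p k)%:R) = c ^+ #|I| * [forall k, p k]%:R.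
Proof.
rewrite big_split /= prodr_const; congr (_ * _).
case: (boolP [forall k, p k]) => [/forallP p_all | /forallPn [k pNk]].
  by rewrite big1 // => k _; rewrite p_all.
by rewrite (bigD1 k) //= (negbTE pNk) mul0r.
Qed.

Lemma sum_natr_eq (R : pzSemiRingType) (T : finType) (P : pred T) (y : T) :
  \sum_(x | P x) ((y == x)%:R : R) = (P y)%:R.
Proof.
case Py: (P y); last first.
  by rewrite big1 // => x Px; case: eqP => // yx; move: Py; rewrite yx Px.
rewrite (bigD1 y) //= eqxx big1 ?addr0 // => x /andP [_ xy].
by rewrite eq_sym (negbTE xy).
Qed.

Lemma projE (C : numClosedFieldType) n (v : 'cV[C]_n) i j :
  proj v i j = v i 0 * (v j 0)^*.
Proof. by rewrite !mxE big_ord1 !mxE. Qed.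

Section TupleStates.
Variables (C : numClosedFieldType) (N m : nat) (S : {set bits N}).

Definition tuples_in : {set mbits N m} := [set z in ffun_on (mem S)].

Definition inj_tuples_in : {set mbits N m} := [set z in ffun_on (mem S) | injectiveb z].

Lemma card_tuples_in : #|tuples_in| = (#|S| ^ m)%N.
Proof. by rewrite cardsE card_ffun_on card_ord. Qed.

Lemma card_inj_tuples_in : #|inj_tuples_in| = (#|S| ^_ m)%N.
Proof. by rewrite card_inj_ffuns_on card_ord. Qed.

Lemma tensor_pow_set_state :
  tensor_pow m (proj (set_state C S)) = proj (set_state C tuples_in).
Proof.
apply/matrixP => i j; rewrite mxE projE !set_stateE.
under eq_bigr do rewrite projE !set_stateE !enum_rankK.
rewrite big_split /= -rmorph_prod /= !prod_scaled_bool card_ord.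
have in_tuples z : (z \in tuples_in) = [forall k, z k \in S].
  by rewrite inE; apply/ffun_onP/forallP.
by rewrite !in_tuples card_tuples_in natrX rootCX ?ler0n // exprVn.
Qed.

Lemma psi_uni_set_state : psi_uni C m S = set_state C inj_tuples_in.
Proof.
apply/matrixP => i j; rewrite (ord1 j) set_stateE mxE summxE.
under eq_bigr do rewrite /uniq_state mxE sum_ketE.
rewrite -mulr_sumr mulrA -invfM -sqrtCM ?nnegrE ?ler0n // -natrM bin_ffact.
rewrite -card_inj_tuples_in inE; congr (_ * _).
set z := enum_val i; case: (boolP (injectiveb z)) => [/injectiveP z_inj | _] /=.
  rewrite sum_natr_eq card_imset // card_ord eqxx !andbT; congr ((nat_of_bool _)%:R).
  apply/idP/idP => [/subsetP z_S | /ffun_onP z_S].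
    by apply/ffun_onP => k; apply/z_S/imsetP; exists k.
  by apply/subsetP => _ /imsetP [k _ ->]; apply: z_S.
by rewrite andbF big1.
Qed.

End TupleStates.

Lemma ffact_le_expn (K m : nat) : (K ^_ m <= K ^ m)%N.
Proof.
elim: m => [|m IH]; first by rewrite ffactn0 expn0.
by rewrite ffactnSr expnS mulnC leq_mul // leq_subr.
Qed.

Lemma expn_ffact_gap (K m : nat) : (K ^ m * K <= K ^_ m * K + m ^ 2 * K ^ m)%N.
Proof.
elim: m => [|m IH]; first by rewrite ffactn0 expn0 leq_addr.
move: IH (ffact_le_expn K m); rewrite ffactnSr [(K ^ m.+1)%N]expnS.
set P := (K ^ m)%N; set F := (K ^_ m)%N.
case: (leqP m K) => [/subnK <- | /ltnW Km]; last by rewrite (eqP Km); nia.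
by rewrite addnK; nia.
Qed.

Lemma sqrtC_one_sub_ratio_le (C : numClosedFieldType) (F P K m : nat) :
  (0 < K)%N -> (0 < P)%N -> (F <= P)%N -> (P * K <= F * K + m ^ 2 * P)%N ->
  sqrtC (1 - (F%:R : C) / P%:R) <= m%:R / sqrtC K%:R.
Proof.
move=> K_gt0 P_gt0 FP gap.
have K0 : 0 < (K%:R : C) by rewrite ltr0n.
have P0 : 0 < (P%:R : C) by rewrite ltr0n.
have -> : 1 - (F%:R : C) / P%:R = (P - F)%:R / P%:R.
  by rewrite natrB // mulrBl divff ?gt_eqF.
rewrite -[m%:R](@sqrCK C) ?ler0n // -rootCV ?ler0n //.
rewrite -sqrtCM ?nnegrE ?invr_ge0 ?exprn_ge0 ?ler0n //.
rewrite ler_sqrtC ?nnegrE ?divr_ge0 ?mulr_ge0 ?invr_ge0 ?exprn_ge0 ?ler0n //.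
by rewrite ler_pdivrMr // mulrAC ler_pdivlMr // -natrX -!natrM ler_nat mulnBl leq_subLR.
Qed.

Theorem lemma1 :
  exists c : nat, forall (C : numClosedFieldType) (N : nat) (S : {set bits N}) (m : nat),
    (1 <= m <= #|S|)%N ->
    trnorm (tensor_pow m (proj (psiS C S)) - proj (psi_uni C m S))
      <= (c%:R : C) * m%:R / sqrtC (#|S|%:R).
Proof.
exists 2%N => C N S m /andP [m_gt0 m_le_K].
have K_gt0 : (0 < #|S|)%N := leq_trans m_gt0 m_le_K.
have inj_sub : inj_tuples_in m S \subset tuples_in m S.
  by apply/subsetP => z; rewrite !inE => /andP [].
have inj_nonempty : inj_tuples_in m S != set0.
  by rewrite -card_gt0 card_inj_tuples_in ffact_gt0.
rewrite psiSE tensor_pow_set_state psi_uni_set_state trnorm_set_stateB //.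
rewrite -mulrA ler_pM2l ?ltr0n //; apply: sqrtC_one_sub_ratio_le => //.
- by rewrite card_tuples_in expn_gt0 K_gt0.
- exact: subset_leq_card.
- by rewrite card_tuples_in card_inj_tuples_in expn_ffact_gap.
Qed.
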